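(* Let $P$ be a Poisson tensor on $\mathbb{R}^3$, let $H\in C^\infty(\mathbb{R}^3)$, let $S\in C^\infty(\mathbb{R}^3)$ satisfy $PdS=0$, and let $g$ be the symmetric tensor with components $g^{ij}=H^iH^j-\delta^{ij}\sum_k H^kH^k$. If $x$ is a regular point of $P$ (i.e. $P(x)\neq 0$) with $d_xS\neq 0$, then $x$ is an equilibrium point of the system $\dot{x}=PdH+gdS$ if and only if $x$ is an equilibrium of the gradient system $\dot{x}=gdS$.
   Context: $\mathbb{R}^3$ carries the standard Euclidean metric, used to identify tangent and cotangent spaces with $\mathbb{R}^3$; $H^i=H_i=\partial H/\partial x^i$. A Poisson tensor is a skew-symmetric bivector field satisfying the Jacobi identity. *)

From HB Require Import structures.
From mathcomp Require Import all_boot all_order all_algebra.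
From mathcomp Require Import all_classical all_reals all_analysis.
Set Implicit Arguments. Unset Strict Implicit. Unset Printing Implicit Defensive.
Import Order.TTheory GRing.Theory Num.Theory.
Import numFieldNormedType.Exports.
Local Open Scope ring_scope.

Section Defs.
Variable R : realType.
Notation pt := 'rV[R]_3.

Definition ebasis (i : 'I_3) : pt := delta_mx 0 i.

Definition partial (i : 'I_3) (f : pt -> R) : pt -> R :=
  fun x => 'D_(ebasis i) f x.

Fixpoint iter_partial (l : seq 'I_3) (f : pt -> R) : pt -> R :=
  match l with
  | [::] => f
  | i :: l' => partial i (iter_partial l' f)
  end.

Definition smooth (f : pt -> R) : Prop :=
  forall (l : seq 'I_3) (x : pt), differentiable (iter_partial l f) x.

Definition grad (f : pt -> R) (x : pt) : pt := \row_i partial i f x.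

Definition poisson_tensor (P : pt -> 'M[R]_3) : Prop :=
  (forall i j, smooth (fun x => P x i j)) /\
  (forall x, (P x)^T = - P x) /\
  (forall x i j k,
     \sum_(l < 3) (P x i l * partial l (fun y => P y j k) x
                 + P x j l * partial l (fun y => P y k i) x
                 + P x k l * partial l (fun y => P y i j) x) = 0).

Definition apply_bivector (P : pt -> 'M[R]_3) (f : pt -> R) (x : pt) : pt :=
  \row_i \sum_(j < 3) P x i j * partial j f x.

Definition gtensor (H : pt -> R) (x : pt) : 'M[R]_3 :=
  \matrix_(i, j) (partial i H x * partial j H x
                  - (i == j)%:R * \sum_(k < 3) partial k H x ^+ 2).

Definition apply_g (H S : pt -> R) (x : pt) : pt :=
  \row_i \sum_(j < 3) gtensor H x i j * partial j S x.

End Defs.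

From HB Require Import structures.
From mathcomp Require Import all_boot all_order all_algebra.
From mathcomp Require Import all_classical all_reals all_analysis.
From mathcomp Require Import ring.
Set Implicit Arguments.
Unset Strict Implicit.
Import Order.TTheory GRing.Theory Num.Theory.
Local Open Scope ring_scope.

(* In R^3 a skew matrix acts as the cross product with its axial vector p, so
   P dS = 0 with dS <> 0 forces p = a dS, and P dH = a (dH x dS) = a w.  By the
   BAC-CAB rule g dS = dH x (dH x dS) = dH x w, which is orthogonal to w; hence
   a w + dH x w vanishes iff both summands do.  Finally dH x w = 0 already
   forces w = 0, because dS . (dH x w) = - |w|^2. *)

Definition i0 : 'I_3 := @Ordinal 3 0 isT.
Definition i1 : 'I_3 := @Ordinal 3 1 isT.
Definition i2 : 'I_3 := @Ordinal 3 2 isT.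

Lemma big_ord3 (V : nmodType) (F : 'I_3 -> V) : \sum_i F i = F i0 + F i1 + F i2.
Proof.
rewrite !big_ord_recr big_ord0 /= add0r.
by congr (F _ + F _ + F _); apply/val_inj.
Qed.

Lemma ord3_ind (P : 'I_3 -> Prop) : P i0 -> P i1 -> P i2 -> forall i, P i.
Proof.
move=> P0 P1 P2 [[|[|[|//]]] lt_i3].
- by rewrite (_ : Ordinal _ = i0) //; apply/val_inj.
- by rewrite (_ : Ordinal _ = i1) //; apply/val_inj.
- by rewrite (_ : Ordinal _ = i2) //; apply/val_inj.
Qed.

Lemma row3_ext (R : Type) (u v : 'rV[R]_3) :
  u 0 i0 = v 0 i0 -> u 0 i1 = v 0 i1 -> u 0 i2 = v 0 i2 -> u = v.
Proof. by move=> e0 e1 e2; apply/rowP; apply: ord3_ind. Qed.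

Definition row3 {R : Type} (a b c : R) : 'rV[R]_3 := \row_k nth a [:: a; b; c] k.

Definition dot {R : pzSemiRingType} {n} (u v : 'rV[R]_n) : R :=
  \sum_i u 0 i * v 0 i.

Definition cross {R : pzRingType} (u v : 'rV[R]_3) : 'rV[R]_3 :=
  row3 (u 0 i1 * v 0 i2 - u 0 i2 * v 0 i1)
       (u 0 i2 * v 0 i0 - u 0 i0 * v 0 i2)
       (u 0 i0 * v 0 i1 - u 0 i1 * v 0 i0).

Definition axial {R : Type} (A : 'M[R]_3) : 'rV[R]_3 :=
  row3 (A i1 i2) (A i2 i0) (A i0 i1).

Section DotProduct.
Variables (R : pzSemiRingType) (n : nat).
Implicit Types u v w : 'rV[R]_n.

Lemma dotr0 u : dot u 0 = 0.
Proof. by rewrite /dot big1 // => i _; rewrite mxE mulr0. Qed.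

Lemma dotDr u v w : dot u (v + w) = dot u v + dot u w.
Proof. by rewrite /dot -big_split; apply: eq_bigr => i _; rewrite mxE mulrDr. Qed.

Lemma dotZl a u v : dot (a *: u) v = a * dot u v.
Proof. by rewrite /dot mulr_sumr; apply: eq_bigr => i _; rewrite mxE mulrA. Qed.

End DotProduct.

Lemma dot_self_eq0 (R : realDomainType) n (v : 'rV[R]_n) : dot v v = 0 -> v = 0.
Proof.
move=> /psumr_eq0P v0; apply/rowP => i; rewrite mxE.
by apply/eqP; rewrite -sqrf_eq0 expr2 v0 // => j _; rewrite -expr2 sqr_ge0.
Qed.

Section CrossProduct.
Variable R : comPzRingType.
Implicit Types u v w : 'rV[R]_3.

Lemma crossC u v : cross u v = - cross v u.
Proof. by apply: row3_ext; rewrite !mxE /=; ring. Qed.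

Lemma crossZr a u v : cross u (a *: v) = a *: cross u v.
Proof. by apply: row3_ext; rewrite !mxE /=; ring. Qed.

Lemma cross_cross u v w : cross u (cross v w) = dot u w *: v - dot u v *: w.
Proof. by rewrite /dot !big_ord3; apply: row3_ext; rewrite !mxE /=; ring. Qed.

Lemma dot_crossr u v : dot v (cross u v) = 0.
Proof. by rewrite /dot !big_ord3 !mxE /=; ring. Qed.

Lemma dot_cross_cross u v :
  dot v (cross u (cross u v)) = - dot (cross u v) (cross u v).
Proof. by rewrite /dot !big_ord3 !mxE /=; ring. Qed.

Lemma cross_eq0_mul u v : cross u v = 0 -> forall i j, u 0 i * v 0 j = u 0 j * v 0 i.
Proof.
move=> uv0; have c k : cross u v 0 k = 0 by rewrite uv0 mxE.
have := c i0; have := c i1; have := c i2; rewrite !mxE /=.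
move=> /subr0_eq e2 /subr0_eq e1 /subr0_eq e0.
by apply: ord3_ind; apply: ord3_ind; rewrite // mulrC.
Qed.

End CrossProduct.

Lemma cross_eq0_scale (R : fieldType) (u v : 'rV[R]_3) :
  cross u v = 0 -> u != 0 -> exists a, v = a *: u.
Proof.
move=> uv0 u_neq0.
have [k uk_neq0] : exists k, u 0 k != 0.
  apply/existsP; move: u_neq0; apply: contraNT => /existsPn u0.
  by apply/eqP/rowP => k; rewrite mxE; apply/eqP/negbNE.
exists (v 0 k / u 0 k); apply/rowP => j.
by rewrite mxE mulrAC [v 0 k * _]mulrC -(cross_eq0_mul uv0) [u 0 k * _]mulrC mulfK.
Qed.

Lemma skew_diag (R : numDomainType) (A : 'M[R]_3) i : A^T = - A -> A i i = 0.
Proof.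
move=> /(congr1 (fun B : 'M[R]_3 => B i i)); rewrite !mxE => /eqP.
by rewrite -subr_eq0 opprK -mulr2n mulrn_eq0 => /eqP.
Qed.

Lemma skew_mulmx (R : numDomainType) (A : 'M[R]_3) v :
  A^T = - A -> v *m A = cross (axial A) v.
Proof.
move=> skewA; have Aji i j : A j i = - A i j.
  by have := congr1 (fun B : 'M[R]_3 => B i j) skewA; rewrite !mxE.
apply: row3_ext; rewrite !mxE !big_ord3 !skew_diag //=.
all: by rewrite ?(Aji i0 i1) ?(Aji i0 i2) ?(Aji i1 i2); ring.
Qed.

Lemma orthogonal_add_eq0 (R : realDomainType) n (u v : 'rV[R]_n) :
  dot u v = 0 -> u + v = 0 -> u = 0 /\ v = 0.
Proof.
move=> uv0 uDv0; have u0 : u = 0.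
  by apply: dot_self_eq0; rewrite -[dot u u]addr0 -uv0 -dotDr uDv0 dotr0.
by move: uDv0; rewrite u0 add0r.
Qed.

Lemma scale_cross_add_cross_cross_eq0 (R : realDomainType) a (u v : 'rV[R]_3) :
  a *: cross u v + cross u (cross u v) = 0 <-> cross u (cross u v) = 0.
Proof.
set w := cross u v; split=> [sum0 | uw0].
- by apply: (proj2 (orthogonal_add_eq0 _ sum0)); rewrite dotZl dot_crossr mulr0.
- have w0 : w = 0.
    by apply: dot_self_eq0; apply/eqP; rewrite -oppr_eq0 -dot_cross_cross uw0 dotr0.
  by rewrite uw0 w0 scaler0 addr0.
Qed.

Section PoissonGradient.
Variable R : realType.
Implicit Types (P : 'rV[R]_3 -> 'M[R]_3) (f H S : 'rV[R]_3 -> R) (x : 'rV[R]_3).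

Lemma apply_bivector_cross P f x :
  (P x)^T = - P x -> apply_bivector P f x = cross (grad f x) (axial (P x)).
Proof.
move=> skewPx; rewrite crossC -skew_mulmx // -mulmxN -skewPx.
by apply/rowP => i; rewrite !mxE; apply: eq_bigr => j _; rewrite !mxE mulrC.
Qed.

Lemma apply_g_cross H S x :
  apply_g H S x = cross (grad H x) (cross (grad H x) (grad S x)).
Proof.
by rewrite cross_cross /dot; apply: row3_ext; rewrite !(mxE, big_ord3) /=; ring.
Qed.

End PoissonGradient.

Theorem mainTheorem9 (R : realType) (P : 'rV[R]_3 -> 'M[R]_3)
  (H S : 'rV[R]_3 -> R) (x : 'rV[R]_3) :
  poisson_tensor P -> smooth H -> smooth S ->
  (forall y, apply_bivector P S y = 0) ->
  P x != 0 -> grad S x != 0 ->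
  (apply_bivector P H x + apply_g H S x = 0 <-> apply_g H S x = 0).
Proof.
move=> [_ [skewP _]] _ _ PdS0 _ dS_neq0.
have PdE f : apply_bivector P f x = cross (grad f x) (axial (P x)).
  exact: apply_bivector_cross.
have [a Px_axial] : exists a, axial (P x) = a *: grad S x.
  by apply: cross_eq0_scale dS_neq0; rewrite -PdE PdS0.
rewrite PdE Px_axial crossZr apply_g_cross.
exact: scale_cross_add_cross_cross_eq0.
Qed.
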